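(* Let $k\geq2$ and let $W\subseteq\mathbb{Z}_{3k}$, $\overline W=\mathbb{Z}_{3k}\setminus W$, satisfy: for every $i\in\mathbb{Z}_{3k}$, $|x^i\cap W|\geq2$ and $|C^i\cap\overline W|\geq2$; and for every $i\in\overline W$, $[i+2k,i+2k+\omega(i)]_{3k}\subseteq W$. Then there exists $i\in\overline W$ with $p^i\equiv1\pmod3$.
   Context: $\mathbb{Z}_{3k}=\{0,\dots,3k-1\}$ with addition modulo $3k$; $[a,b]_{3k}$ is the cyclic closed interval from $a$ to $b$. $C^i=\{i,\dots,i+k-1\}$ (mod $3k$), $x^i=\{i,i+k,i+2k\}$. For $i\in\overline W$, $\omega(i)=\min\{t\ge0:i+k+t\in\overline W\}$. For $i\in\overline W$ the sequence $(r^i_t)_{t\ge0}$ is defined by $r^i_0=i$, $r^i_t=r^i_{t-1}+k+\omega(r^i_{t-1})$ for $t\ge1$, and $p^i=\max\{t\ge0:\sum_{j=0}^{t-1}\omega(r^i_j)\le k-1\}$. *)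

From mathcomp Require Import all_boot.
Set Implicit Arguments. Unset Strict Implicit. Unset Printing Implicit Defensive.

(* Z_{3k} is represented by 'I_(3*k); a natural number i stands for its
   residue i %% (3*k). W is a finite set of residues. *)
Section Defs.
Variables (k : nat) (W : {set 'I_(3 * k)}).

Definition inW (i : nat) : bool :=
  [exists j : 'I_(3 * k), (j \in W) && (val j == i %% (3 * k))].

Definition Cset (i : nat) : {set 'I_(3 * k)} :=
  [set j : 'I_(3 * k) | [exists t : 'I_k, val j == (i + t) %% (3 * k)]].

Definition xset (i : nat) : {set 'I_(3 * k)} :=
  [set j : 'I_(3 * k) | [exists t : 'I_3, val j == (i + t * k) %% (3 * k)]].

(* omega(i) = min { t >= 0 : i + k + t in Wbar }; the search is over
   t < 3k (enough, since only residues matter); it is used for i in Wbar,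
   where t = 2k is a witness. *)
Definition omega (i : nat) : nat :=
  find (fun t => ~~ inW (i + k + t)) (iota 0 (3 * k)).

Fixpoint r (i t : nat) : nat :=
  match t with
  | 0 => i %% (3 * k)
  | t'.+1 => (r i t' + k + omega (r i t')) %% (3 * k)
  end.

Definition omsum (i t : nat) : nat := \sum_(j < t) omega (r i j).

Definition is_p (i p : nat) : Prop :=
  omsum i p <= k - 1 /\ (forall t, omsum i t <= k - 1 -> t <= p).

End Defs.

From mathcomp Require Import all_boot zify.
Set Implicit Arguments. Unset Strict Implicit. Unset Printing Implicit Defensive.

(* Start the orbit at u = v + k + omega(v) for some v in Wbar; every r_t stays
   in Wbar and each step adds omega(r_t) >= 1 to the partial sums S_t.  The
   window hypothesis, together with the minimality of omega at r_t and at v,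
   rules out every way for S_t to jump past k, so S_(p+1) = k for p = p^u.
   Then r_(p+1) = u + (p+2)k (mod 3k) is congruent to u mod k; as x^u meets
   Wbar at most once, r_(p+1) = u, i.e. 3 divides p + 2. *)

Lemma eqmod_mul3 (k x y : nat) : 0 < k -> x = y %[mod k] ->
  exists2 s, s < 3 & y = x + s * k %[mod 3 * k].
Proof.
move=> k_gt0 eq_xy.
have modk_mod3 z : z %% (3 * k) %% k = z %% k by rewrite modn_dvdm // dvdn_mull.
have quo_lt3 z : z %% (3 * k) %/ k < 3 by rewrite ltn_divLR // ltn_mod muln_gt0.
have := divn_eq (x %% (3 * k)) k; have := divn_eq (y %% (3 * k)) k.
rewrite !modk_mod3 -eq_xy; move: (quo_lt3 x) (quo_lt3 y).
move: (_ %/ k) (_ %/ k) (x %% k) => q p c q_lt3 p_lt3 def_y def_x.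
have [le_pq|lt_qp] := leqP p q; [exists (q - p) | exists (3 + q - p)]; try lia.
- rewrite -modnDml def_x [p * k + c + _](_ : _ = q * k + c).
    by rewrite -def_y modn_mod.
  nia.
- rewrite -modnDml def_x [p * k + c + _](_ : _ = q * k + c + 3 * k).
    by rewrite modnDr -def_y modn_mod.
  nia.
Qed.

Lemma exists_crossing (f : nat -> nat) (k n : nat) :
  f 0 < k -> k <= f n -> exists t, f t < k <= f t.+1.
Proof.
move=> f0_lt; elim: n => [|n IHn fn_ge]; first by rewrite leqNgt f0_lt.
by case: (leqP k (f n)) => [/IHn //|fn_lt]; exists n; rewrite fn_lt.
Qed.

Section Orbit.
Variables (k : nat) (W : {set 'I_(3 * k)}).

Lemma inW_eqmod a b : a = b %[mod 3 * k] -> inW W a = inW W b.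
Proof. by rewrite /inW => ->. Qed.

Lemma inW_ord (i : 'I_(3 * k)) : inW W i = (i \in W).
Proof.
apply/existsP/idP => [[j /andP[jW /eqP ji]]|iW]; last first.
  by exists i; rewrite iW modn_small /=.
by have -> : i = j by apply/val_inj; rewrite /= ji modn_small.
Qed.

Lemma omega_mod n : omega W (n %% (3 * k)) = omega W n.
Proof.
by apply: eq_find => t /=; rewrite (@inW_eqmod _ (n + k + t)) // -!addnA modnDml.
Qed.

Lemma omsumS u t : omsum W u t.+1 = omsum W u t + omega W (r W u t).
Proof. by rewrite /omsum big_ord_recr. Qed.

Lemma r_closed_form u t : r W u t = (u + t * k + omsum W u t) %% (3 * k).
Proof.
elim: t => [|t IHt]; first by rewrite /omsum big_ord0 !addn0.
rewrite /= omsumS {1}IHt -addnA modnDml; congr (_ %% _); lia.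
Qed.

Lemma omsum_homo u : {homo omsum W u : m n / m <= n}.
Proof.
apply: homo_leq => [//|? ? ?|t]; first exact: leq_trans.
by rewrite omsumS leq_addr.
Qed.

Lemma is_p_crossing u t : omsum W u t < k <= omsum W u t.+1 -> is_p W u t.
Proof.
case/andP=> lt_tk le_kt; split=> [|t' le_t'k]; first lia.
rewrite leqNgt; apply/negP => /(omsum_homo u); lia.
Qed.

Hypothesis k_gt0 : 0 < k.
Hypothesis x_card : forall i : 'I_(3 * k), 2 <= #|xset k i :&: W|.

Let k3_gt0 : 0 < 3 * k. Proof. by rewrite muln_gt0. Qed.

Lemma inW_xpair n (t1 t2 : 'I_3) : t1 != t2 ->
  inW W (n + t1 * k) || inW W (n + t2 * k).
Proof.
move=> t1t2; apply/negPn/negP => /norP[t1N t2N].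
pose i := Ordinal (ltn_pmod n k3_gt0).
pose f (t : 'I_3) := Ordinal (ltn_pmod (n + t * k) k3_gt0).
have f_inW t : (f t \in W) = inW W (n + t * k).
  by rewrite -inW_ord; apply: inW_eqmod; rewrite modn_mod.
have sub_img : xset k i :&: W \subset f @: [set t | f t \in W].
  apply/subsetP => j; rewrite !inE => /andP[/existsP[t /eqP jt] jW].
  have ftj : f t = j by apply/val_inj; rewrite /= jt modnDml.
  by apply/imsetP; exists t; rewrite ?inE ftj.
have sub_compl : [set t | f t \in W] \subset ~: [set t1; t2].
  by apply/subsetP => t; rewrite !inE f_inW; apply: contraL => /orP[]/eqP->.
have := cardsC [set t1; t2]; rewrite cards2 t1t2 card_ord.
have := leq_trans (x_card i) (subset_leq_card sub_img).
move/leq_trans/(_ (leq_imset_card _ _))/leq_trans/(_ (subset_leq_card sub_compl)).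
lia.
Qed.

Lemma eqmod3_notinW a b : ~~ inW W a -> ~~ inW W b ->
  a = b %[mod k] -> a = b %[mod 3 * k].
Proof.
move=> aN bN /(eqmod_mul3 k_gt0)[[|s] s_lt3 eq_ba]; first by rewrite eq_ba addn0.
have := inW_xpair a (t1 := Ordinal (isT : 0 < 3)) (t2 := Ordinal s_lt3) isT.
by rewrite /= addn0 (negbTE aN) -(inW_eqmod eq_ba) (negbTE bN).
Qed.

Lemma has_omega n : ~~ inW W n ->
  has (fun t => ~~ inW W (n + k + t)) (iota 0 (3 * k)).
Proof.
move=> nN; apply/hasP; exists (2 * k); first by rewrite mem_iota; lia.
by rewrite (@inW_eqmod _ n) // -addnA -mulSn modnDr.
Qed.

Lemma omega_notinW n : ~~ inW W n -> ~~ inW W (n + k + omega W n).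
Proof.
move=> /has_omega has_n; have := nth_find 0 has_n.
by rewrite nth_iota //; move: has_n; rewrite has_find size_iota.
Qed.

Lemma inW_before_omega n s : ~~ inW W n -> s < omega W n -> inW W (n + k + s).
Proof.
move=> /has_omega has_n lt_s; have := before_find 0 lt_s.
rewrite nth_iota ?add0n => [/negbFE //|].
by apply: ltn_trans lt_s _; move: has_n; rewrite has_find size_iota.
Qed.

(* Two of n, n + k, n + 2k lie in W, so n in Wbar forces n + k in W. *)
Lemma omega_gt0 n : ~~ inW W n -> 0 < omega W n.
Proof.
move=> nN; rewrite lt0n; apply: contraNneq (omega_notinW nN) => ->.
have := inW_xpair n (t1 := Ordinal (isT : 0 < 3)) (t2 := Ordinal (isT : 1 < 3)) isT.
by rewrite /= mul0n !addn0 mul1n (negbTE nN).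
Qed.

Section FromWbar.
Variable u : nat.
Hypothesis uN : ~~ inW W u.

Lemma r_notinW t : ~~ inW W (r W u t).
Proof.
elim: t => [|t IHt]; first by rewrite /= (@inW_eqmod _ u) ?modn_mod.
by rewrite /= (inW_eqmod (modn_mod _ _)) omega_notinW.
Qed.

Lemma omsum_ge t : t <= omsum W u t.
Proof.
rewrite -[t in t <= _]card_ord -sum1_card.
by apply: leq_sum => j _; apply/omega_gt0/r_notinW.
Qed.

Lemma dvd3_omsum_eq n : omsum W u n = k -> 3 %| n.+1.
Proof.
move=> Sn_k.
have r_eq : r W u n = u + n.+1 * k %[mod 3 * k].
  by rewrite r_closed_form modn_mod Sn_k (mulSnr n) addnA.
have r_eqk : r W u n = u %[mod k].
  rewrite -(modn_dvdm _ (dvdn_mull 3 (dvdnn k))) r_eq.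
  by rewrite modn_dvdm ?dvdn_mull // addnC modnMDl.
have := eqmod3_notinW (r_notinW n) uN r_eqk; rewrite r_eq -[u in _ = u %[mod _]]addn0.
by move/eqP; rewrite eqn_modDl mod0n -/(dvdn _ _) dvdn_pmul2r.
Qed.

End FromWbar.

Hypothesis window : forall i : 'I_(3 * k), i \notin W ->
  forall t, t <= omega W i -> inW W (i + 2 * k + t).

Lemma inW_window a s : ~~ inW W a -> s <= omega W a -> inW W (a + 2 * k + s).
Proof.
move=> aN le_s; pose i := Ordinal (ltn_pmod a k3_gt0).
have iN : i \notin W by rewrite -inW_ord (@inW_eqmod _ a) ?modn_mod.
have := window iN (t := s); rewrite /= omega_mod => /(_ le_s).
by rewrite (@inW_eqmod _ (a + 2 * k + s)) // -!addnA modnDml.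
Qed.

Lemma omsum_no_overshoot v u t :
  ~~ inW W v -> u = v + k + omega W v %[mod 3 * k] ->
  omsum W u t < k -> omsum W u t.+1 <= k.
Proof.
move=> vN eq_uv lt_Sk; rewrite leqNgt; apply/negP.
have uN : ~~ inW W u by rewrite (inW_eqmod eq_uv) omega_notinW.
set a := r W u t; have aN : ~~ inW W a := r_notinW uN t.
rewrite omsumS -/a => gt_Sk; set d := k - omsum W u t.
have d_gt0 : 0 < d by lia.
have d_lt : d < omega W a by lia.
have ad_eqk : a + d = u %[mod k].
  rewrite -modnDml /a r_closed_form modn_dvdm ?dvdn_mull // modnDml.
  by rewrite -addnA subnKC 1?ltnW // -addnA -mulSnr addnC modnMDl.
have [[|[|[|//]]] _ eq_u] := eqmod_mul3 k_gt0 ad_eqk.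
- rewrite addn0 eq_uv in eq_u.
  case: (leqP d (omega W v)) => [le_dv|lt_vd].
  + have eq_a : a = v + k + (omega W v - d) %[mod 3 * k].
      by apply/eqP; rewrite -(eqn_modDr d) -addnA subnK // eq_u.
    move: aN; rewrite (inW_eqmod eq_a) inW_before_omega //.
    by rewrite ltn_subrL d_gt0 (leq_trans d_gt0 le_dv).
  + have eq_v : v = a + 2 * k + (d - omega W v) %[mod 3 * k].
      apply/eqP; rewrite -(eqn_modDr (k + omega W v)) addnA eq_u.
      rewrite [X in _ == X %[mod _]](_ : _ = a + d + 3 * k) ?modnDr //.
      by clear -lt_vd; lia.
    by move: vN; rewrite (inW_eqmod eq_v) inW_window //; clear -lt_vd d_lt; lia.
- by move: uN; rewrite (inW_eqmod eq_u) mul1n addnAC inW_before_omega //.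
- by move: uN; rewrite (inW_eqmod eq_u) addnAC inW_window // ltnW.
Qed.

End Orbit.

Theorem mainTheorem10 (k : nat) (W : {set 'I_(3 * k)}) :
  2 <= k ->
  (forall i : 'I_(3 * k), 2 <= #|xset k i :&: W|) ->
  (forall i : 'I_(3 * k), 2 <= #|Cset k i :&: ~: W|) ->
  (forall i : 'I_(3 * k), i \notin W ->
     forall t, t <= omega W i -> inW W (i + 2 * k + t)) ->
  exists2 i : 'I_(3 * k), i \notin W &
    exists p, is_p W i p /\ p %% 3 = 1.
Proof.
move=> k_ge2 x_card C_card window; have k_gt0 := ltnW k_ge2.
have k3_gt0 : 0 < 3 * k by rewrite muln_gt0.
have [v vN] : exists v : 'I_(3 * k), v \notin W.
  have /card_gt0P[v] := leq_trans (isT : 0 < 2) (C_card (Ordinal k3_gt0)).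
  by rewrite !inE => /andP[_ vN]; exists v.
rewrite -inW_ord in vN.
pose u := Ordinal (ltn_pmod (v + k + omega W v) k3_gt0).
have eq_uv : u = v + k + omega W v %[mod 3 * k] by rewrite modn_mod.
have uN : ~~ inW W u by rewrite (inW_eqmod W eq_uv) omega_notinW.
have [t /andP[lt_Sk le_kS]] : exists t, omsum W u t < k <= omsum W u t.+1.
  by apply: exists_crossing (omsum_ge k_gt0 x_card uN k); rewrite /omsum big_ord0.
have S_le := omsum_no_overshoot k_gt0 window vN eq_uv lt_Sk.
have S_eq : omsum W u t.+1 = k by apply/eqP; rewrite eqn_leq le_kS S_le.
exists u; first by rewrite -inW_ord.
exists t; split; first by apply: is_p_crossing; rewrite lt_Sk.
by have := dvd3_omsum_eq k_gt0 x_card uN S_eq; lia.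
Qed.
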